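(* Let $E$ be an $m\times n$ realizable matrix of rank $k$, and let $A$ be a $(0,1)$ matrix such that $A+E$ is a $(0,1)$ matrix. Then the following are equivalent: (a) $A$ and $A+E$ are Gram mates and $(2A+E)E^T=0$; (b) $A+E$ is obtained from $A$ by changing the signs of some positive singular values. Furthermore, if (a) or (b) holds, then: (i) the number of positive singular values whose signs are changed is $\mathrm{rank}(E)$; (ii) the positive singular values of $A$ whose signs are changed are the same as the $k$ positive singular values of $-\frac12E$; (iii) the corresponding left (resp. right) singular vectors of $A$ can be obtained from the corresponding left (resp. right) singular vectors of $-\frac12E$, and in particular the corresponding left (resp. right) singular vectors of $A$ form a basis of $\mathrm{Col}(E)$ (resp. $\mathrm{Row}(E)$).
   Context: Two $(0,1)$ matrices $A,B$ are Gram mates if $AA^T=BB^T$, $A^TA=B^TB$ and $A\neq B$. A $(0,1,-1)$ matrix $E$ with $E\mathbf 1=0$ and $\mathbf 1^TE=0^T$ is realizable if there is a $(0,1)$ matrix $A$ with $A$, $A+E$ Gram mates. ''$B$ is obtained from $A$ by changing the signs of some (say $r\ge1$) positive singular values'' means: there are orthogonal $U,V$ and rectangular diagonal $\Sigma$ with nonnegative diagonal with $A=U\Sigma V^T$, and a diagonal $\pm1$ matrix $S$ with exactly $r$ entries $-1$, each at a position $i$ with $\Sigma_{ii}>0$, such that $B=US\Sigma V^T$; the singular values $\Sigma_{ii}$ at those positions are the ones whose signs are changed, and the corresponding columns of $U$ and $V$ are the corresponding left and right singular vectors. *)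

From HB Require Import structures.
From mathcomp Require Import all_boot all_order all_algebra.
From mathcomp Require Import reals.
Set Implicit Arguments. Unset Strict Implicit. Unset Printing Implicit Defensive.
Import Order.TTheory GRing.Theory Num.Theory.
Local Open Scope ring_scope.

Section Defs.
Variable R : realType.

Definition is01 m n (A : 'M[R]_(m, n)) : Prop :=
  forall i j, A i j = 0 \/ A i j = 1.

Definition gram_mates m n (A B : 'M[R]_(m, n)) : Prop :=
  [/\ is01 A, is01 B, A *m A^T = B *m B^T, A^T *m A = B^T *m B & A <> B].

Definition realizable m n (E : 'M[R]_(m, n)) : Prop :=
  [/\ (forall i j, E i j = 0 \/ E i j = 1 \/ E i j = -1),
      E *m (const_mx 1 : 'cV[R]_n) = 0,
      (const_mx 1 : 'rV[R]_m) *m E = 0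
    & exists A : 'M[R]_(m, n), gram_mates A (A + E)].

Definition orthogonal_mx n (U : 'M[R]_n) : Prop := U *m U^T = 1%:M.

Definition rect_diag_nonneg m n (S : 'M[R]_(m, n)) : Prop :=
  (forall (i : 'I_m) (j : 'I_n), (i : nat) <> j -> S i j = 0) /\
  (forall i j, 0 <= S i j).

Definition svd m n (A : 'M[R]_(m, n)) (U : 'M[R]_m) (S : 'M[R]_(m, n))
    (V : 'M[R]_n) : Prop :=
  [/\ orthogonal_mx U, orthogonal_mx V, rect_diag_nonneg S & A = U *m S *m V^T].

Definition sign_mx m (D : {set 'I_m}) : 'M[R]_m :=
  \matrix_(i, j) (if i == j then (if i \in D then -1 else 1) else 0).

(* B is obtained from A by changing the signs of the positive singular values
   at positions D (nonempty), w.r.t. the SVD A = U S V^T. *)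
Definition sign_change_witness m n (A B : 'M[R]_(m, n)) (U : 'M[R]_m)
    (S : 'M[R]_(m, n)) (V : 'M[R]_n) (D : {set 'I_m}) : Prop :=
  [/\ svd A U S V, D != set0,
      (forall i : 'I_m, i \in D -> exists j : 'I_n, (j : nat) = i /\ 0 < S i j)
    & B = U *m sign_mx D *m S *m V^T].

Definition obtained_by_sign_change m n (A B : 'M[R]_(m, n)) : Prop :=
  exists U S V D, @sign_change_witness m n A B U S V D.

Definition proj_l m (D : {set 'I_m}) : 'M[R]_m :=
  \matrix_(i, j) ((i == j) && (i \in D))%:R.
Definition proj_r m n (D : {set 'I_m}) : 'M[R]_n :=
  \matrix_(i, j) ((i == j) && [exists d in D, (d : nat) == i])%:R.

End Defs.

From HB Require Import structures.
From mathcomp Require Import all_boot all_order all_algebra.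
From mathcomp Require Import reals ring complex.
Import Order.TTheory GRing.Theory Num.Theory.
Local Open Scope ring_scope.
Set Implicit Arguments. Unset Strict Implicit. Unset Printing Implicit Defensive.

(* (b) => (a): if B = U G S V^T with G a diagonal sign matrix, then G commutes
   with S S^T and G^2 = 1, so the Gram matrices of A and B agree, and
   (A + B)(B - A)^T = U (1 + G)(G - 1) S S^T U^T = 0.
   (a) => (b): A^T A = B^T B makes M = (A + B)^T (B - A) skew-symmetric, and
   (A + B)(B - A)^T = 0 gives M^2 = 0, so M^T M = 0 and M = 0.  Thus
   X = (A + B)/2 and Y = (B - A)/2 satisfy X^T Y = 0 = X Y^T, and such a pair
   has a common SVD with disjointly supported singular values: split off a
   singular pair of X by Householder reflections (Y vanishes on it) and
   induct.  Then B = X + Y and A = X - Y differ exactly by the signs of the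
   singular values coming from Y.
   (i)-(iii): -(B - A)/2 = U P S V^T with P the coordinate projection onto the
   flipped positions, and S is invertible on these positions, which pins down
   the rank and the column and row spaces. *)

Lemma symmetric_mx_nonzero_eigen (R : rcfType) n (M : 'M[R]_n) :
  M^T = M -> M != 0 ->
  exists (r : R) (v : 'rV[R]_n), [/\ r != 0, v != 0 & v *m M = r *: v].
Proof.
(* Diagonalise the complexification: its spectrum is real, some eigenvalue is
   nonzero, and as a root of the real characteristic polynomial it has a real
   eigenvector. *)
move=> Msym Mn0.
pose f := real_complex R; pose Mc := map_mx f M.
have Mc_herm : Mc \is hermsymmx.
  apply/is_hermitianmxP; rewrite expr0 scale1r.
  apply/matrixP => i j; rewrite !mxE -[in LHS]Msym !mxE.
  by apply/esym/CrealP; rewrite realE !lecE /= eqxx le_total.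
have /hermitian_normalmx /orthomx_spectralP McE := Mc_herm.
have d_real := hermitian_spectral_diag_real Mc_herm.
set P := spectralmx Mc in McE; set d := spectral_diag Mc in McE d_real.
have P_unit : P \in unitmx by apply: spectral_unit.
have [j dj_neq0] : exists j, d 0 j != 0.
  apply/existsP; apply: contraNT Mn0; rewrite negb_exists => /forallP d0.
  rewrite -(map_mx_eq0 f) -/Mc McE; apply/eqP.
  suff -> : diag_mx d = 0 by rewrite mulmx0 mul0mx.
  by apply/matrixP => a b; rewrite !mxE; move: (d0 a); rewrite negbK => /eqP ->; rewrite mul0rn.
have dj_eigen : eigenvalue Mc (d 0 j).
  apply/eigenvalueP; exists (row j P).
    rewrite -row_mul {1}McE !mulmxA mulmxV // mul1mx.
    by rewrite row_mul row_diag_mx -scalemxAl -rowE.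
  apply/eqP => /(congr1 (mulmx^~ (invmx P))); rewrite -row_mul mulmxV // mul0mx.
  by move/rowP/(_ j); rewrite !mxE eqxx => /eqP; rewrite oner_eq0.
have [r dj_r] : exists r, d 0 j = f r.
  move: (mxOverP d_real 0 j); case: (d 0 j) => a b; rewrite realE !lecE /= => b0.
  by exists a; congr Complex; case/orP: b0 => /andP [/eqP -> _].
move: dj_eigen; rewrite eigenvalue_root_char dj_r /Mc -map_char_poly fmorph_root.
rewrite -eigenvalue_root_char => /eigenvalueP [v vM v_neq0].
exists r, v; split => //.
by apply: contraNneq dj_neq0; rewrite dj_r => ->; rewrite /f rmorph0.
Qed.

Section SumOfSquares.
Variable R : realDomainType.

Lemma gram_mx_eq0 m n (N : 'M[R]_(m, n)) : N^T *m N = 0 -> N = 0.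
Proof.
move=> NTN0; apply/matrixP => i j; rewrite mxE.
have := congr1 (fun M : 'M_n => M j j) NTN0; rewrite !mxE.
under eq_bigr do rewrite mxE -expr2.
move/eqP; rewrite psumr_eq0 => [/allP/(_ i)|k _]; last exact: sqr_ge0.
by rewrite mem_index_enum => /(_ isT); rewrite sqrf_eq0 => /eqP.
Qed.

Lemma sqnorm_ge0 n (x : 'cV[R]_n) : 0 <= (x^T *m x) 0 0.
Proof. by rewrite mxE sumr_ge0 // => i _; rewrite mxE -expr2 sqr_ge0. Qed.

Lemma sqnorm_gt0 n (x : 'cV[R]_n) : x != 0 -> 0 < (x^T *m x) 0 0.
Proof.
move=> x_neq0; rewrite lt_def sqnorm_ge0 andbT.
apply: contra x_neq0 => /eqP x0; apply/eqP/gram_mx_eq0.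
by rewrite [LHS]mx11_scalar x0; apply/matrixP => i j; rewrite !mxE mul0rn.
Qed.

End SumOfSquares.

Section Orthogonal.
Variable R : realType.

Lemma trmxZ m n (a : R) (M : 'M[R]_(m, n)) : (a *: M)^T = a *: M^T.
Proof. by apply/matrixP => i j; rewrite !mxE. Qed.

Lemma orthogonal_mxC n (U : 'M[R]_n) : orthogonal_mx U -> U^T *m U = 1%:M.
Proof. exact: mulmx1C. Qed.

Lemma orthogonal_mx1 n : orthogonal_mx (1%:M : 'M[R]_n).
Proof. by rewrite /orthogonal_mx trmx1 mulmx1. Qed.

Lemma orthogonal_mxM n (U V : 'M[R]_n) :
  orthogonal_mx U -> orthogonal_mx V -> orthogonal_mx (U *m V).
Proof.
rewrite /orthogonal_mx => UUT VVT.
by rewrite trmx_mul mulmxA -(mulmxA U) VVT mulmx1 UUT.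
Qed.

Lemma orthogonal_block_mx n (U : 'M[R]_n) :
  orthogonal_mx U -> orthogonal_mx (block_mx (1%:M : 'M_1) 0 0 U).
Proof.
rewrite /orthogonal_mx => UUT; rewrite tr_block_mx mulmx_block !trmx0 trmx1.
by rewrite !mulmx0 !mul0mx !addr0 !add0r mulmx1 UUT -scalar_mx_block.
Qed.

Lemma mulmx_tr_conj k l m n (P : 'M[R]_(k, m)) (X Y : 'M[R]_(m, n)) (Q : 'M[R]_(n, l)) :
  Q *m Q^T = 1%:M -> (P *m X *m Q) *m (P *m Y *m Q)^T = P *m (X *m Y^T) *m P^T.
Proof. by move=> QQT; rewrite !trmx_mul !mulmxA -(mulmxA _ Q) QQT mulmx1. Qed.

Lemma tr_mulmx_conj k l m n (P : 'M[R]_(k, m)) (X Y : 'M[R]_(m, n)) (Q : 'M[R]_(n, l)) :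
  P^T *m P = 1%:M -> (P *m X *m Q)^T *m (P *m Y *m Q) = Q^T *m (X^T *m Y) *m Q.
Proof. by move=> PTP; rewrite !trmx_mul !mulmxA -(mulmxA _ P^T) PTP mulmx1. Qed.

(* The Householder reflection exchanging [u] and the first basis vector. *)
Lemma orthogonal_mx_col0 p (u : 'cV[R]_p.+1) :
  u^T *m u = 1%:M -> exists2 H : 'M[R]_p.+1, orthogonal_mx H & H *m delta_mx 0 0 = u.
Proof.
move=> uTu; pose e : 'cV[R]_p.+1 := delta_mx 0 0; pose w := e - u.
have eTe : e^T *m e = 1%:M.
  by rewrite trmx_delta mul_delta_mx; apply/matrixP => i j; rewrite !ord1 !mxE.
have uTe : u^T *m e = (u 0 0)%:M.
  by rewrite -colE [LHS]mx11_scalar !mxE.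
have eTu : e^T *m u = (u 0 0)%:M by rewrite -[LHS]trmxK trmx_mul trmxK uTe tr_scalar_mx.
have wTw : w^T *m w = (2 - 2 * u 0 0)%:M.
  rewrite [w^T]linearB /= mulmxBl !mulmxBr eTe eTu uTe uTu.
  by apply/matrixP => i j; rewrite !ord1 !mxE /= !mulr1n; ring.
have [w0|w_neq0] := eqVneq w 0.
  exists 1%:M; first exact: orthogonal_mx1.
  by rewrite mul1mx; apply/eqP; rewrite -subr_eq0 -/e -/w w0.
pose c := 2 - 2 * u 0 0.
have c_neq0 : c != 0.
  by move: (sqnorm_gt0 w_neq0); rewrite wTw mxE eqxx mulr1n => /lt0r_neq0.
pose W := w *m w^T.
have WW : W *m W = c *: W by rewrite mulmxA -(mulmxA w) wTw mul_mx_scalar scalemxAl.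
have WT : W^T = W by rewrite trmx_mul trmxK.
exists (1%:M - (2 / c) *: W).
  rewrite /orthogonal_mx [(_ - _)^T]linearB /= [(_ *: W)^T]linearZ /= trmx1 WT.
  rewrite mulmxBl !mulmxBr mul1mx mulmx1 -!scalemxAl -!scalemxAr mul1mx WW !scalerA.
  have -> : 2 / c * (2 / c) * c = 2 / c + 2 / c by field.
  by rewrite scalerDl opprB addrK subrK.
have wTe : w^T *m e = (c / 2)%:M.
  rewrite [w^T]linearB /= mulmxBl eTe uTe.
  by apply/matrixP => i j; rewrite !ord1 !mxE /= !mulr1n /c; field.
rewrite mulmxBl mul1mx -scalemxAl -mulmxA wTe mul_mx_scalar scalerA.
have -> : 2 / c * (c / 2) = 1 by field.
by rewrite scale1r /w opprB addrC subrK.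
Qed.

End Orthogonal.

Section SimultaneousSVD.
Variable R : realType.

Lemma mulmx_block_scalar m n p (a b : R) (X : 'M[R]_(m, n)) (Y : 'M[R]_(n, p)) :
  block_mx (a%:M : 'M_1) 0 0 X *m block_mx (b%:M : 'M_1) 0 0 Y
  = block_mx (a * b)%:M 0 0 (X *m Y).
Proof. by rewrite mulmx_block !mulmx0 !mul0mx !addr0 !add0r scalar_mxM. Qed.

Lemma tr_block_scalar m n (a : R) (X : 'M[R]_(m, n)) :
  (block_mx (a%:M : 'M_1) 0 0 X)^T = block_mx a%:M 0 0 X^T.
Proof. by rewrite tr_block_mx tr_scalar_mx !trmx0. Qed.

Lemma rect_diag_nonneg_block m n (s : R) (S : 'M[R]_(m, n)) :
  0 <= s -> rect_diag_nonneg S -> rect_diag_nonneg (block_mx (s%:M : 'M_1) 0 0 S).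
Proof.
move=> s_ge0 [S_diag S_ge0]; split => [i j|i j]; rewrite !mxE;
  case: splitP => i' Ei; rewrite mxE; case: splitP => j' Ej; rewrite ?mxE ?ord1 //=.
- by rewrite Ei Ej !ord1.
- by move=> ij; apply: S_diag => e; apply: ij; rewrite Ei Ej e.
Qed.

Lemma svd_block m n (s : R) (X : 'M[R]_(m, n)) U S V : 0 <= s -> svd X U S V ->
  svd (block_mx (s%:M : 'M_1) 0 0 X) (block_mx 1%:M 0 0 U)
      (block_mx s%:M 0 0 S) (block_mx 1%:M 0 0 V).
Proof.
move=> s_ge0 [U_orth V_orth S_diag ->]; split.
- exact: orthogonal_block_mx.
- exact: orthogonal_block_mx.
- exact: rect_diag_nonneg_block.
by rewrite tr_block_scalar !mulmx_block_scalar mul1r mulr1.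
Qed.

Lemma svd_mulmx_orthogonal m n (X : 'M[R]_(m, n)) U S V P Q :
  orthogonal_mx P -> orthogonal_mx Q -> svd X U S V ->
  svd (P *m X *m Q^T) (P *m U) S (Q *m V).
Proof.
move=> P_orth Q_orth [U_orth V_orth S_diag ->]; split => //.
- exact: orthogonal_mxM.
- exact: orthogonal_mxM.
by rewrite trmx_mul !mulmxA.
Qed.

Definition simultaneous_svd m n (X Y : 'M[R]_(m, n)) : Prop :=
  exists U S1 S2 V,
    [/\ svd X U S1 V, svd Y U S2 V & forall i j, S1 i j = 0 \/ S2 i j = 0].

Lemma simultaneous_svd0 m n : simultaneous_svd (0 : 'M[R]_(m, n)) 0.
Proof.
have svd0 : svd (0 : 'M[R]_(m, n)) 1%:M 0 1%:M.
  split; try exact: orthogonal_mx1; last by rewrite mulmx0 mul0mx.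
  by split=> *; rewrite mxE.
by exists 1%:M, 0, 0, 1%:M; split=> // *; left; rewrite mxE.
Qed.

Lemma simultaneous_svdC m n (X Y : 'M[R]_(m, n)) :
  simultaneous_svd X Y -> simultaneous_svd Y X.
Proof.
move=> [U [S1 [S2 [V [svdX svdY disj]]]]].
by exists U, S2, S1, V; split => // i j; case: (disj i j); [right | left].
Qed.

Lemma simultaneous_svd_block m n (s : R) (X Y : 'M[R]_(m, n)) :
  0 <= s -> simultaneous_svd X Y ->
  simultaneous_svd (block_mx (s%:M : 'M_1) 0 0 X) (block_mx (0%:M : 'M_1) 0 0 Y).
Proof.
move=> s_ge0 [U [S1 [S2 [V [svdX svdY disj]]]]].
exists (block_mx 1%:M 0 0 U), (block_mx s%:M 0 0 S1), (block_mx 0%:M 0 0 S2).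
exists (block_mx 1%:M 0 0 V); split; [exact: svd_block | exact: svd_block |].
move=> i j; rewrite !mxE; case: splitP => i' _; rewrite !mxE; case: splitP => j' _;
  rewrite ?mxE ?ord1 /= ?mulr1n; by [right | left | apply: disj].
Qed.

Lemma simultaneous_svd_mulmx m n (X Y : 'M[R]_(m, n)) P Q :
  orthogonal_mx P -> orthogonal_mx Q -> simultaneous_svd X Y ->
  simultaneous_svd (P *m X *m Q^T) (P *m Y *m Q^T).
Proof.
move=> P_orth Q_orth [U [S1 [S2 [V [svdX svdY disj]]]]].
by exists (P *m U), S1, S2, (Q *m V); split => //; apply: svd_mulmx_orthogonal.
Qed.

Lemma normalize_cV n (x : 'cV[R]_n) (c : R) : 0 < c -> x^T *m x = c%:M ->
  ((Num.sqrt c)^-1 *: x)^T *m ((Num.sqrt c)^-1 *: x) = 1%:M.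
Proof.
move=> c_gt0 xTx; rewrite [(_ *: x)^T]linearZ /= -scalemxAl -scalemxAr xTx scalerA.
rewrite -invfM -expr2 sqr_sqrtr ?ltW // scale_scalar_mx mulVf //.
exact: lt0r_neq0.
Qed.

Lemma singular_pair m n (X : 'M[R]_(m, n)) : X != 0 ->
  exists s (u : 'cV_m) (v : 'cV_n), [/\ 0 < s, u^T *m u = 1%:M, v^T *m v = 1%:M,
                                        X *m v = s *: u & X^T *m u = s *: v].
Proof.
move=> X_neq0.
have XTX_sym : (X^T *m X)^T = X^T *m X by rewrite trmx_mul trmxK.
have XTX_neq0 : X^T *m X != 0 by apply: contra X_neq0 => /eqP /gram_mx_eq0 ->.
have [r [w [r_neq0 w_neq0 wXTX]]] := symmetric_mx_nonzero_eigen XTX_sym XTX_neq0.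
have w_eigen : X^T *m X *m w^T = r *: w^T.
  by rewrite -[X^T *m X]XTX_sym -trmx_mul wXTX [(_ *: w)^T]linearZ.
have wT_neq0 : w^T != 0 by rewrite trmx_eq0.
pose v := (Num.sqrt ((w^T^T *m w^T) 0 0))^-1 *: w^T.
have vTv : v^T *m v = 1%:M := normalize_cV (sqnorm_gt0 wT_neq0) (mx11_scalar _).
have v_eigen : X^T *m X *m v = r *: v by rewrite -scalemxAr w_eigen !scalerA mulrC.
have XvXv : (X *m v)^T *m (X *m v) = r%:M.
  by rewrite trmx_mul -mulmxA (mulmxA X^T) v_eigen -scalemxAr vTv scale_scalar_mx mulr1.
have r_gt0 : 0 < r.
  by rewrite lt_def r_neq0 /=; have := sqnorm_ge0 (X *m v); rewrite XvXv mxE eqxx.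
pose s := Num.sqrt r.
have s_gt0 : 0 < s by rewrite sqrtr_gt0.
exists s, (s^-1 *: (X *m v)), v; split => //.
- exact: normalize_cV XvXv.
- by rewrite scalerA divff ?scale1r // lt0r_neq0.
rewrite -scalemxAr mulmxA v_eigen scalerA -[r in _ * r](sqr_sqrtr (ltW r_gt0)).
by rewrite -/s expr2 mulKf // lt0r_neq0.
Qed.

Lemma block_mx_of_e0 a b (Z : 'M[R]_(1 + a, 1 + b)) (s : R) :
  Z *m delta_mx 0 0 = s *: (delta_mx 0 0 : 'cV_(1 + a)) ->
  Z^T *m delta_mx 0 0 = s *: (delta_mx 0 0 : 'cV_(1 + b)) ->
  Z = block_mx (s%:M : 'M_1) 0 0 (drsubmx Z).
Proof.
move=> Zcol Zrow.
have col0 i : Z i 0 = s * (i == 0)%:R.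
  by have /matrixP/(_ i 0) := Zcol; rewrite -colE !mxE eqxx andbT.
have row0 j : Z 0 j = s * (j == 0)%:R.
  by have /matrixP/(_ j 0) := Zrow; rewrite -colE !mxE eqxx andbT.
have lshift0 c : lshift c (0 : 'I_1) = 0 :> 'I_(1 + c) by apply: val_inj.
rewrite -{1}[Z]submxK; congr block_mx; apply/matrixP => i j; rewrite !mxE !ord1 /=.
- by rewrite !lshift0 col0 eqxx mulr1.
- by rewrite lshift0 row0 mulr0.
- by rewrite lshift0 col0 mulr0.
Qed.

Lemma deflation m n (X Y : 'M[R]_(1 + m, 1 + n)) :
  X^T *m Y = 0 -> X *m Y^T = 0 -> X != 0 ->
  exists P Q s, [/\ orthogonal_mx P, orthogonal_mx Q, 0 <= s,
    P^T *m X *m Q = block_mx (s%:M : 'M_1) 0 0 (drsubmx (P^T *m X *m Q))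
  & P^T *m Y *m Q = block_mx (0%:M : 'M_1) 0 0 (drsubmx (P^T *m Y *m Q))].
Proof.
move=> XTY XYT X_neq0.
have [s [u [v [s_gt0 uTu vTv Xv XTu]]]] := singular_pair X_neq0.
have Yv : Y *m v = 0.
  have : s *: (Y *m v) = 0.
    by rewrite scalemxAr -XTu mulmxA -[Y *m X^T]trmxK trmx_mul trmxK XYT trmx0 mul0mx.
  by move/eqP; rewrite scaler_eq0 (gt_eqF s_gt0) => /eqP.
have YTu : Y^T *m u = 0.
  have : s *: (Y^T *m u) = 0.
    by rewrite scalemxAr -Xv mulmxA -[Y^T *m X]trmxK trmx_mul trmxK XTY trmx0 mul0mx.
  by move/eqP; rewrite scaler_eq0 (gt_eqF s_gt0) => /eqP.
have [P P_orth Pe] := orthogonal_mx_col0 uTu.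
have [Q Q_orth Qe] := orthogonal_mx_col0 vTv.
have PTu : P^T *m u = delta_mx 0 0 by rewrite -Pe mulmxA orthogonal_mxC // mul1mx.
have QTv : Q^T *m v = delta_mx 0 0 by rewrite -Qe mulmxA orthogonal_mxC // mul1mx.
exists P, Q, s; split => //; first exact: ltW.
  apply: (@block_mx_of_e0 m n).
    by rewrite -mulmxA Qe -mulmxA Xv -scalemxAr PTu.
  by rewrite !trmx_mul trmxK -!mulmxA Pe XTu -scalemxAr QTv.
apply: (@block_mx_of_e0 m n).
  by rewrite -mulmxA Qe -mulmxA Yv mulmx0 scale0r.
by rewrite !trmx_mul trmxK -!mulmxA Pe YTu mulmx0 scale0r.
Qed.

Lemma block_scalar_eq0 m n (a : R) (X : 'M[R]_(m, n)) :
  block_mx (a%:M : 'M_1) 0 0 X = 0 -> X = 0.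
Proof. by rewrite -block_mx0 => /eq_block_mx []. Qed.

Lemma simultaneous_svd_of_cross_eq0 m n (X Y : 'M[R]_(m, n)) :
  X^T *m Y = 0 -> X *m Y^T = 0 -> simultaneous_svd X Y.
Proof.
elim: m n X Y => [|m IH] [|n] X Y XTY XYT;
  try by rewrite ?(flatmx0 X) ?(flatmx0 Y) ?(thinmx0 X) ?(thinmx0 Y);
        exact: simultaneous_svd0.
wlog X_neq0 : X Y XTY XYT / X != 0.
  move=> gen; have [X0|] := eqVneq X 0; last exact: gen.
  have [Y0|Y_neq0] := eqVneq Y 0; first by rewrite X0 Y0; exact: simultaneous_svd0.
  by apply/simultaneous_svdC/gen; rewrite // -trmx0 -?XTY -?XYT trmx_mul trmxK.
have [P [Q [s [P_orth Q_orth s_ge0 XE YE]]]] := deflation XTY XYT X_neq0.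
suff : simultaneous_svd (P^T *m X *m Q) (P^T *m Y *m Q).
  move/(simultaneous_svd_mulmx P_orth Q_orth).
  by rewrite !mulmxA P_orth !mul1mx -!mulmxA Q_orth !mulmx1.
rewrite XE YE; apply: simultaneous_svd_block s_ge0 _; apply: IH.
- apply: (@block_scalar_eq0 _ _ (s * 0)).
  rewrite -mulmx_block_scalar -tr_block_scalar -XE -YE.
  by rewrite tr_mulmx_conj ?trmxK // XTY mulmx0 mul0mx.
- apply: (@block_scalar_eq0 _ _ (s * 0)).
  rewrite -mulmx_block_scalar -tr_block_scalar -XE -YE.
  by rewrite mulmx_tr_conj // XYT mulmx0 mul0mx.
Qed.

End SimultaneousSVD.

Section SignChange.
Variable R : realType.

Lemma sign_mx_diag m (D : {set 'I_m}) :
  sign_mx R D = diag_mx (\row_i (if i \in D then -1 else 1)).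
Proof. by apply/matrixP => i j; rewrite !mxE; case: eqVneq => [->|]; rewrite ?mxE. Qed.

Lemma proj_l_diag m (D : {set 'I_m}) : proj_l R D = diag_mx (\row_i (i \in D)%:R).
Proof. by apply/matrixP => i j; rewrite !mxE; case: eqVneq => [->|]; rewrite ?mxE. Qed.

Lemma proj_r_diag m n (D : {set 'I_m}) :
  proj_r R n D = diag_mx (\row_j [exists d in D, (d : nat) == j]%:R).
Proof. by apply/matrixP => i j; rewrite !mxE; case: eqVneq => [->|]; rewrite ?mxE. Qed.

Lemma proj_l_idem m (D : {set 'I_m}) : proj_l R D *m proj_l R D = proj_l R D.
Proof.
rewrite proj_l_diag mulmx_diag; congr diag_mx; apply/rowP => i; rewrite !mxE.
by case: (i \in D); rewrite ?mulr1 ?mulr0.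
Qed.

Lemma sign_mxT m (D : {set 'I_m}) : (sign_mx R D)^T = sign_mx R D.
Proof. by rewrite sign_mx_diag tr_diag_mx. Qed.

Lemma mulmx_sign_mx m (D : {set 'I_m}) : sign_mx R D *m sign_mx R D = 1%:M.
Proof.
rewrite sign_mx_diag mulmx_diag; apply/matrixP => i j; rewrite !mxE.
by case: (i \in D); rewrite ?mulrNN mulr1.
Qed.

Lemma orthogonal_sign_mx m (D : {set 'I_m}) : orthogonal_mx (sign_mx R D).
Proof. by rewrite /orthogonal_mx sign_mxT mulmx_sign_mx. Qed.

Lemma sign_mx_set0 m : sign_mx R (set0 : {set 'I_m}) = 1%:M.
Proof. by apply/matrixP => i j; rewrite !mxE in_set0; case: eqP. Qed.

Lemma sign_mx_sub1 m (D : {set 'I_m}) : sign_mx R D - 1%:M = - (2%:R *: proj_l R D).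
Proof.
apply/matrixP => i j; rewrite !mxE; case: (i == j); rewrite /= ?mulr1n ?mulr0n.
  by case: (i \in D); rewrite ?mulr1 ?mulr0 ?subrr ?oppr0 // -opprD.
by rewrite subrr mulr0 oppr0.
Qed.

Lemma sign_mx_comm_mul_tr m n (D : {set 'I_m}) (S : 'M[R]_(m, n)) :
  rect_diag_nonneg S -> sign_mx R D *m (S *m S^T) = S *m S^T *m sign_mx R D.
Proof.
move=> [S_diag _]; rewrite sign_mx_diag mul_diag_mx mul_mx_diag.
apply/matrixP => i j; rewrite !mxE; have [<-|ij] := eqVneq i j; first by rewrite mulrC.
rewrite big1 ?mulr0 ?mul0r // => k _; rewrite mxE.
have [ik|] := eqVneq (i : nat) k; last by move/eqP/S_diag ->; rewrite mul0r.
rewrite [S j k]S_diag ?mulr0 // -ik => /val_inj ji; by rewrite ji eqxx in ij.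
Qed.

Lemma gram_mates_of_sign_change m n (A B : 'M[R]_(m, n)) U S V D :
  is01 A -> is01 B -> sign_change_witness A B U S V D ->
  gram_mates A B /\ (A + B) *m (B - A)^T = 0.
Proof.
move=> A01 B01 [[U_orth V_orth S_rd A_def] D_neq0 D_pos B_def]; subst A B.
have GSST := sign_mx_comm_mul_tr D S_rd; have GG := mulmx_sign_mx D.
have GT := sign_mxT D.
set G := sign_mx R D in GSST GG GT B01 *.
have cross M N : (U *m M *m V^T) *m (U *m N *m V^T)^T = U *m (M *m N^T) *m U^T.
  by apply: mulmx_tr_conj; rewrite trmxK orthogonal_mxC.
have tr_cross M N : (U *m M *m V^T)^T *m (U *m N *m V^T) = V *m (M^T *m N) *m V^T.
  by rewrite tr_mulmx_conj ?trmxK // orthogonal_mxC.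
rewrite -(mulmxA U G) in B01 *; split; first split => //.
- rewrite !cross trmx_mul GT; congr (_ *m _ *m _).
  by rewrite mulmxA -(mulmxA G S) GSST -mulmxA GG mulmx1.
- by rewrite !tr_cross trmx_mul GT !mulmxA -(mulmxA _ G G) GG mulmx1.
- move=> /(congr1 (fun M => U^T *m M *m V)).
  rewrite !mulmxA orthogonal_mxC // -!mulmxA orthogonal_mxC // !mulmx1 !mul1mx => SGS.
  have [i iD] := set0Pn _ D_neq0; have [j [ji Sij_gt0]] := D_pos i iD.
  move/matrixP/(_ i j): SGS; rewrite /G sign_mx_diag mul_diag_mx !mxE iD mulN1r.
  by move/eqP; rewrite -subr_eq0 opprK -mulr2n mulrn_eq0 /= (gt_eqF Sij_gt0).
have -> : U *m S *m V^T + U *m (G *m S) *m V^T = U *m ((1%:M + G) *m S) *m V^T.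
  by rewrite mulmxDl mul1mx mulmxDr mulmxDl.
have -> : U *m (G *m S) *m V^T - U *m S *m V^T = U *m ((G - 1%:M) *m S) *m V^T.
  by rewrite mulmxBl mul1mx mulmxBr mulmxBl.
have GSST1 : S *m S^T *m (G - 1%:M) = (G - 1%:M) *m (S *m S^T).
  by rewrite mulmxBr mulmxBl GSST mulmx1 mul1mx.
have G1G1 : (1%:M + G) *m (G - 1%:M) = 0.
  by rewrite mulmxDl mul1mx mulmxBr GG mulmx1 addrA subrK subrr.
rewrite cross trmx_mul [(G - _)^T]linearB /= GT trmx1.
have -> : (1%:M + G) *m S *m (S^T *m (G - 1%:M)) = 0.
  by rewrite -mulmxA (mulmxA S) GSST1 mulmxA G1G1 mul0mx.
by rewrite mulmx0 mul0mx.
Qed.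

Lemma tr_cross_eq0_of_gram m n (A B : 'M[R]_(m, n)) :
  A^T *m A = B^T *m B -> (A + B) *m (B - A)^T = 0 -> (A + B)^T *m (B - A) = 0.
Proof.
move=> ATA cross; set M := (A + B)^T *m (B - A).
have ME : M = A^T *m B - B^T *m A.
  by rewrite /M [(A + B)^T]linearD /= mulmxDl !mulmxBr ATA addrA subrK.
have MT : M^T = - M by rewrite ME [(_ - _)^T]linearB /= !trmx_mul !trmxK opprB.
have crossT : (B - A) *m (A + B)^T = 0 by rewrite -[B - A]trmxK -trmx_mul cross trmx0.
have MM : M *m M = 0 by rewrite /M mulmxA -(mulmxA _ (B - A)) crossT mulmx0 mul0mx.
by apply: gram_mx_eq0; rewrite MT mulNmx MM oppr0.
Qed.

Definition pos_diag_set m n (S : 'M[R]_(m, n)) : {set 'I_m} :=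
  [set i : 'I_m | [exists j : 'I_n, (j == i :> nat) && (0 < S i j)]].

Lemma rect_diag_nonnegD m n (S1 S2 : 'M[R]_(m, n)) :
  rect_diag_nonneg S1 -> rect_diag_nonneg S2 -> rect_diag_nonneg (S1 + S2).
Proof.
move=> [S1_diag S1_ge0] [S2_diag S2_ge0].
by split=> i j; rewrite mxE; [move=> ij; rewrite S1_diag ?S2_diag ?addr0 | rewrite addr_ge0].
Qed.

Lemma sign_mx_pos_diag_set m n (S1 S2 : 'M[R]_(m, n)) :
  rect_diag_nonneg S1 -> rect_diag_nonneg S2 -> (forall i j, S1 i j = 0 \/ S2 i j = 0) ->
  sign_mx R (pos_diag_set S2) *m (S1 + S2) = S1 - S2.
Proof.
move=> [S1_diag _] [S2_diag S2_ge0] disj.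
rewrite sign_mx_diag mul_diag_mx; apply/matrixP => i j; rewrite !mxE.
have [ij|/eqP ij] := eqVneq (i : nat) j; last first.
  by rewrite S1_diag // S2_diag // addr0 subr0 mulr0.
case: ifP; rewrite inE.
  case/existsP => j' /andP [/eqP j'i S2_gt0].
  have <- : j' = j by apply: val_inj; rewrite /= j'i ij.
  case: (disj i j') => [->|S2_0]; first by rewrite add0r sub0r mulN1r.
  by rewrite S2_0 ltxx in S2_gt0.
move/negbT; rewrite negb_exists => /forallP/(_ j); rewrite ij eqxx /= -leNgt => S2_le0.
by rewrite mul1r (@le_anti _ _ (S2 i j) 0) ?S2_le0 ?S2_ge0 // addr0 subr0.
Qed.

Lemma sign_change_of_gram_mates m n (A B : 'M[R]_(m, n)) :
  gram_mates A B -> (A + B) *m (B - A)^T = 0 -> obtained_by_sign_change A B.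
Proof.
move=> [_ _ _ ATA A_neq_B] cross.
have crossT := tr_cross_eq0_of_gram ATA cross.
pose h : R := 2^-1.
have XTY : (h *: (A + B))^T *m (h *: (B - A)) = 0.
  by rewrite trmxZ -scalemxAl -scalemxAr crossT !scaler0.
have XYT : (h *: (A + B)) *m (h *: (B - A))^T = 0.
  by rewrite trmxZ -scalemxAl -scalemxAr cross !scaler0.
have [U [S1 [S2 [V [[U_orth V_orth S1_rd XE] [_ _ S2_rd YE] disj]]]]] :=
  simultaneous_svd_of_cross_eq0 XTY XYT.
have GS := sign_mx_pos_diag_set S1_rd S2_rd disj.
set D := pos_diag_set S2 in GS; set G := sign_mx R D in GS.
have AE : A = U *m G *m (S1 + S2) *m V^T.
  have -> : A = h *: (A + B) - h *: (B - A) by apply/matrixP => i j; rewrite !mxE /h; field.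
  by rewrite XE YE -mulmxBl -mulmxBr -GS !mulmxA.
have BE : B = U *m (S1 + S2) *m V^T.
  have -> : B = h *: (A + B) + h *: (B - A) by apply/matrixP => i j; rewrite !mxE /h; field.
  by rewrite XE YE -mulmxDl -mulmxDr.
exists (U *m G), (S1 + S2), V, D; split.
- split => //; first exact: orthogonal_mxM U_orth (orthogonal_sign_mx D).
  exact: rect_diag_nonnegD.
- apply: contra_not_neq A_neq_B => D0.
  by rewrite AE BE /G D0 sign_mx_set0 mulmx1.
- move=> i; rewrite inE => /existsP [j /andP [/eqP ji S2_gt0]].
  exists j; split => //; rewrite mxE ltr_pwDr //; by case: S1_rd.
by rewrite BE -(mulmxA U G) mulmx_sign_mx mulmx1.
Qed.

End SignChange.

Lemma eqmx_of_factors (F : fieldType) m1 m2 n (M : 'M[F]_(m1, n)) (L : 'M[F]_(m2, n))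
    (X : 'M[F]_(m1, m2)) (Y : 'M[F]_(m2, m1)) :
  M = X *m L -> L = Y *m M -> (M == L)%MS.
Proof. by move=> ME LE; apply/andP; split; [rewrite ME | rewrite LE]; exact: submxMl. Qed.

Section RestrictedPseudoInverse.
Variables (R : realType) (m n : nat) (D : {set 'I_m}) (S : 'M[R]_(m, n)).
Hypothesis S_diag : forall (i : 'I_m) (j : 'I_n), (i : nat) <> j -> S i j = 0.
Hypothesis D_pos : forall i, i \in D -> exists j : 'I_n, (j : nat) = i /\ 0 < S i j.

Definition pinv_on : 'M[R]_(n, m) :=
  \matrix_(j, i) (if (j == i :> nat) && (i \in D) then (S i j)^-1 else 0).

Lemma proj_l_mul_pinv_on : proj_l R D *m S *m pinv_on = proj_l R D.
Proof.
apply/matrixP => i k; rewrite proj_l_diag mul_diag_mx !mxE.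
under eq_bigr do rewrite !mxE.
have [iD|niD] := boolP (i \in D); last by rewrite mul0rn big1 // => j _; rewrite !mul0r.
have [j0 [j0i Sij0_gt0]] := D_pos iD.
rewrite (bigD1 j0) //= big1 => [|j j_neq_j0]; last first.
  rewrite S_diag ?mulr0 ?mul0r // => ij; case/eqP: j_neq_j0; apply: val_inj.
  by rewrite /= j0i ij.
rewrite addr0 mul1r j0i; have [<-|ik] := eqVneq i k.
  by rewrite eqxx iD mulfV ?lt0r_neq0.
by rewrite val_eqE (negbTE ik) mulr0.
Qed.

Lemma pinv_on_mul_proj_l : pinv_on *m (proj_l R D *m S) = proj_r R n D.
Proof.
apply/matrixP => j k; rewrite proj_r_diag proj_l_diag mul_diag_mx !mxE.
under eq_bigr do rewrite !mxE.
case: existsP => [[d /andP [dD /eqP dj]]|no_d]; last first.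
  rewrite mul0rn big1 // => i _; case: ifP => [/andP [/eqP ji iD]|]; last by rewrite mul0r.
  by case: no_d; exists i; rewrite iD -ji /=.
rewrite (bigD1 d) //= big1 => [|i i_neq_d]; last first.
  case: ifP => [/andP [/eqP ji _]|]; last by rewrite mul0r.
  by case/eqP: i_neq_d; apply: val_inj; rewrite /= -ji dj.
have [j' [j'd Sdj'_gt0]] := D_pos dD.
have <- : j' = j by apply: val_inj; rewrite /= j'd dj.
rewrite j'd eqxx dD mul1r addr0; have [<-|j'k] := eqVneq j' k.
  by rewrite mulVf ?lt0r_neq0.
rewrite [S d k]S_diag ?mulr0 // => dk; case/eqP: j'k; apply: val_inj; by rewrite /= j'd.
Qed.

End RestrictedPseudoInverse.

Section SignChangeWitness.
Variable R : realType.

Lemma rank_proj_l m (U : 'M[R]_m) (D : {set 'I_m}) :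
  orthogonal_mx U -> \rank (U *m proj_l R D) = #|D|.
Proof.
move=> U_orth.
pose Q : 'M[R]_(#|D|, m) := \matrix_(k, i) (enum_val k == i)%:R.
have QQT : Q *m Q^T = 1%:M.
  apply/matrixP => k k'; rewrite !mxE (bigD1 (enum_val k)) //= big1.
    by rewrite !mxE eqxx mul1r addr0 (inj_eq enum_val_inj) eq_sym.
  by move=> i ni; rewrite !mxE eq_sym (negbTE ni) mul0r.
have QTQ : Q^T *m Q = proj_l R D.
  apply/matrixP => i j; rewrite !mxE.
  have [iD|niD] := boolP (i \in D); last first.
    rewrite andbF big1 // => k _; rewrite !mxE.
    by case: eqP => [ek|]; [move: (enum_valP k); rewrite ek (negbTE niD) | rewrite mul0r].
  rewrite andbT (bigD1 (enum_rank_in iD i)) //= big1.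
    by rewrite !mxE enum_rankK_in // eqxx mul1r addr0.
  move=> k nk; rewrite !mxE; case: eqP => [ek|]; last by rewrite mul0r.
  by case/eqP: nk; apply: enum_val_inj; rewrite enum_rankK_in // ek.
have Q_free : row_free Q by apply/row_freeP; exists Q^T.
have UT_free : row_free U^T by apply/row_freeP; exists U; exact: orthogonal_mxC.
rewrite -QTQ mulmxA mxrankMfree // -mxrank_tr trmx_mul trmxK mxrankMfree //.
exact/eqP.
Qed.

Lemma half_diff_of_sign_change m n (A B : 'M[R]_(m, n)) U S V D :
  sign_change_witness A B U S V D ->
  - (2%:R^-1 *: (B - A)) = U *m (proj_l R D *m S) *m V^T.
Proof.
move=> [[_ _ _ ->] _ _ ->].
have -> : U *m sign_mx R D *m S *m V^T - U *m S *m V^T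
          = U *m ((sign_mx R D - 1%:M) *m S) *m V^T.
  by rewrite mulmxBl mul1mx mulmxBr mulmxBl !mulmxA.
rewrite sign_mx_sub1 mulNmx mulmxN mulNmx -!scalemxAl -scalemxAr -scalemxAl.
by rewrite scalerN opprK scalerA mulVf ?scale1r // pnatr_eq0.
Qed.

Lemma sign_change_spaces m n (A B : 'M[R]_(m, n)) U S V D :
  sign_change_witness A B U S V D ->
  [/\ #|D| = \rank (B - A), ((B - A)^T == (U *m proj_l R D)^T)%MS
    & ((B - A) == (V *m proj_r R n D)^T)%MS].
Proof.
move=> wit; have W_def := half_diff_of_sign_change wit.
move: wit => [[U_orth V_orth [S_diag _] _] _ D_pos _].
have PS_Sp := proj_l_mul_pinv_on S_diag D_pos.
have Sp_PS := pinv_on_mul_proj_l S_diag D_pos.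
have PP := proj_l_idem R D.
set P := proj_l R D in W_def PS_Sp Sp_PS PP *; set Pr := proj_r R n D in Sp_PS *.
set Sp := pinv_on D S in PS_Sp Sp_PS; set W := U *m (P *m S) *m V^T in W_def.
have col : (W^T == (U *m P)^T)%MS.
  apply: (eqmx_of_factors (X := (S *m V^T)^T) (Y := (V *m Sp)^T)); rewrite -trmx_mul.
    by rewrite /W !mulmxA.
  congr trmx; rewrite /W !mulmxA -(mulmxA _ V^T) orthogonal_mxC // mulmx1.
  by rewrite -(mulmxA (U *m P)) -(mulmxA U) (mulmxA P) PS_Sp.
have PrT : Pr^T = Pr by rewrite /Pr proj_r_diag tr_diag_mx.
have PS_Pr : P *m S *m Pr = P *m S by rewrite -Sp_PS !mulmxA PS_Sp PP.
have row : (W == (V *m Pr)^T)%MS.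
  apply: (eqmx_of_factors (X := U *m (P *m S)) (Y := Sp *m U^T)).
    by rewrite trmx_mul PrT /W -{1}PS_Pr !mulmxA.
  rewrite trmx_mul PrT /W !mulmxA -(mulmxA Sp) orthogonal_mxC // mulmx1.
  by rewrite -(mulmxA Sp P S) Sp_PS.
have c_neq0 : - 2%:R != 0 :> R by rewrite oppr_eq0 pnatr_eq0.
have EW : B - A = - 2%:R *: W.
  by rewrite -W_def scalerN scaleNr opprK scalerA mulfV ?scale1r // pnatr_eq0.
rewrite EW trmxZ !(eqmx_scale _ c_neq0) col row; split => //.
by rewrite -mxrank_tr (eqmx_rank col) mxrank_tr rank_proj_l.
Qed.

End SignChangeWitness.

Theorem proposition3p6 (R : realType) (m n k : nat) (E A : 'M[R]_(m, n)) :
  realizable E -> \rank E = k -> is01 A -> is01 (A + E) ->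
  ((gram_mates A (A + E) /\ (2%:R *: A + E) *m E^T = 0)
     <-> obtained_by_sign_change A (A + E)) /\
  (forall (U : 'M[R]_m) (S : 'M[R]_(m, n)) (V : 'M[R]_n) (D : {set 'I_m}),
     sign_change_witness A (A + E) U S V D ->
     [/\ #|D| = \rank E,
         - (2%:R^-1 *: E) = U *m (proj_l R D *m S) *m V^T,
         (E^T == (U *m proj_l R D)^T)%MS
       & (E == (V *m proj_r R n D)^T)%MS]).
Proof.
move=> _ _ A01 AE01.
have diffE : A + E - A = E by rewrite addrC addKr.
have sumE : 2%:R *: A + E = A + (A + E) by rewrite scaler_nat mulr2n addrA.
split=> [|U S V D wit].
  split=> [[mates cross]|[U [S [V [D wit]]]]].
    by apply: sign_change_of_gram_mates mates _; rewrite diffE -sumE.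
  have [mates cross] := gram_mates_of_sign_change A01 AE01 wit.
  by split=> //; move: cross; rewrite diffE -sumE.
have [rankD col row] := sign_change_spaces wit.
have half := half_diff_of_sign_change wit.
by rewrite diffE in rankD col row half.
Qed.
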